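(* Let $M$ be a matroid of rank $3$ on $[n]$. If $M$ has no parallel elements, then $M$ is DJS. In particular, every simple matroid of rank $3$ is DJS.
   Context: A rank-$3$ matroid $M$ on $[n]$ is called DJS if, letting $E$ be the set of non-loop elements of $M$, every linear ordering $w_1w_2\cdots w_m$ of $E$ has three consecutive elements $\{w_j,w_{j+1},w_{j+2}\}$ forming a basis of $M$. (Equivalently, the diagonal arrangement $\{U_{ijk}:\{i,j,k\}\text{ a basis}\}$ restricted to the non-loop coordinates meets every chamber of the braid arrangement in a codimension-2 subcomplex.) A matroid is simple if it has no loops and no parallel elements. *)

From mathcomp Require Import all_boot.
Set Implicit Arguments. Unset Strict Implicit. Unset Printing Implicit Defensive.

Definition matroid_bases (n : nat) (B : {set {set 'I_n}}) : Prop :=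
  B != set0 /\
  forall B1 B2, B1 \in B -> B2 \in B ->
    forall x, x \in B1 :\: B2 ->
      exists2 y, y \in B2 :\: B1 & (B1 :\ x) :|: [set y] \in B.

Definition rank3_matroid (n : nat) (B : {set {set 'I_n}}) : Prop :=
  matroid_bases B /\ forall X, X \in B -> #|X| = 3.

Definition indep (n : nat) (B : {set {set 'I_n}}) (X : {set 'I_n}) : bool :=
  [exists Y in B, X \subset Y].

Definition is_loop (n : nat) (B : {set {set 'I_n}}) (e : 'I_n) : bool :=
  ~~ indep B [set e].

Definition parallel (n : nat) (B : {set {set 'I_n}}) (e f : 'I_n) : bool :=
  [&& e != f, ~~ is_loop B e, ~~ is_loop B f & ~~ indep B [set e; f]].

Definition no_parallel (n : nat) (B : {set {set 'I_n}}) : Prop :=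
  forall e f : 'I_n, ~~ parallel B e f.

Definition simple_matroid (n : nat) (B : {set {set 'I_n}}) : Prop :=
  (forall e : 'I_n, ~~ is_loop B e) /\ no_parallel B.

(* DJS: every linear ordering w_1 ... w_m of the non-loop elements E
   (a duplicate-free sequence whose elements are exactly E) has three
   consecutive elements forming a basis. *)
Definition DJS (n : nat) (B : {set {set 'I_n}}) : Prop :=
  forall w : seq 'I_n,
    uniq w -> (forall e, (e \in w) = ~~ is_loop B e) ->
    exists2 j : nat, j.+2 < size w &
      [exists e0 : 'I_n,
        [set nth e0 w j; nth e0 w j.+1; nth e0 w j.+2] \in B].

From mathcomp Require Import all_boot.
Set Implicit Arguments. Unset Strict Implicit.

(* Since there are no parallel elements, the first two entries w_0, w_1 of an
   ordering are independent, so {w_0, w_1, w_k} is a basis for some k >= 2.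
   Slide the pair along the ordering: if {w_j, w_{j+1}, w_k} is a basis but
   the window {w_j, w_{j+1}, w_{j+2}} is not, rank-3 basis exchange makes
   {w_{j+1}, w_{j+2}, w_k} a basis.  So either some earlier window is a basis,
   or the pair reaches w_{k-2}, w_{k-1} and the window ending at w_k is one. *)

Lemma cards3_neq (T : finType) (a b c : T) :
  #|[set a; b; c]| = 3 -> [/\ a != b, a != c & b != c].
Proof.
rewrite setUC cardsU1 cards2 !inE (eq_sym c a) (eq_sym c b).
by case: (a == b); case: (a == c); case: (b == c).
Qed.

Lemma card3_complete_pair (T : finType) (Y : {set T}) (b c : T) :
  #|Y| = 3 -> b \in Y -> c \in Y -> b != c ->
  exists2 y, y \notin [set b; c] & Y = [set b; c; y].
Proof.
move=> Y3 bY cY bc.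
have bcY : [set b; c] \subset Y by rewrite subUset !sub1set bY cY.
have /eqP/cards1P [y Dy] : #|Y :\: [set b; c]| = 1.
  by rewrite cardsD (setIidPr bcY) cards2 bc Y3.
exists y; first by have := set11 y; rewrite -Dy inE => /andP [].
by rewrite -{1}(setID Y [set b; c]) (setIidPr bcY) Dy.
Qed.

Lemma basis_mem_nonloop (n : nat) (B : {set {set 'I_n}}) (X : {set 'I_n}) e :
  X \in B -> e \in X -> ~~ is_loop B e.
Proof. by move=> XB eX; rewrite negbK; apply/existsP; exists X; rewrite XB sub1set. Qed.

Lemma no_parallel_indep_pair (n : nat) (B : {set {set 'I_n}}) (e f : 'I_n) :
  no_parallel B -> ~~ is_loop B e -> ~~ is_loop B f -> e != f ->
  indep B [set e; f].
Proof. by move=> no_par eN fN ef; have := no_par e f; rewrite /parallel ef eN fN negbK. Qed.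

Section Rank3Bases.

Variables (n : nat) (B : {set {set 'I_n}}).
Hypothesis basesB : matroid_bases B.
Hypothesis card_basis : forall X, X \in B -> #|X| = 3.

Lemma basis_exchange_into (X Y : {set 'I_n}) (y : 'I_n) :
  X \in B -> Y \in B -> y \in Y ->
  exists2 z, z \in X & Y :\ y :|: [set z] \in B.
Proof.
move=> XB YB yY; case: (boolP (y \in X)) => [yX | yNX].
  by exists y => //; rewrite setUC setD1K.
have [_ exchange] := basesB.
have [|z] := exchange Y X YB XB y; first by rewrite inE yNX.
by rewrite inE => /andP [_ zX]; exists z.
Qed.

Lemma indep_pair_basis (b c : 'I_n) :
  indep B [set b; c] -> b != c ->
  exists2 y, y \notin [set b; c] & [set b; c; y] \in B.
Proof.
case/existsP => Y /andP [YB]; rewrite subUset !sub1set => /andP [bY cY] bc.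
have [y yNbc DY] := card3_complete_pair (card_basis YB) bY cY bc.
by exists y; rewrite // -DY.
Qed.

Lemma indep_pair_basis_through (X : {set 'I_n}) (b c : 'I_n) :
  X \in B -> indep B [set b; c] -> b != c ->
  exists2 z, z \in X & [set b; c; z] \in B.
Proof.
move=> XB bcI bc; have [y yNbc bcyB] := indep_pair_basis bcI bc.
have y_in : y \in [set b; c; y] by rewrite !inE eqxx orbT.
have [z zX] := basis_exchange_into XB bcyB y_in.
by rewrite [[set b; c; y]]setUC setU1K //; exists z.
Qed.

Lemma rank3_basis_shift (a b c d : 'I_n) :
  [set a; b; d] \in B -> [set a; b; c] \notin B -> indep B [set b; c] ->
  b != c -> [set b; c; d] \in B.
Proof.
move=> abdB abcNB bcI bc.
have [z] := indep_pair_basis_through abdB bcI bc.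
rewrite !inE => /orP [/orP [/eqP-> | /eqP->] | /eqP-> //] bczB.
- by move: abcNB; rewrite -setUA setUC bczB.
- by case/cards3_neq: (card_basis bczB); rewrite eqxx.
Qed.

Lemma consecutive_basis (x0 : 'I_n) (s : seq 'I_n) (k : nat) :
  uniq s -> {in s &, forall a b, a != b -> indep B [set a; b]} ->
  1 < k < size s -> [set nth x0 s 0; nth x0 s 1; nth x0 s k] \in B ->
  exists2 j, j.+2 <= k & [set nth x0 s j; nth x0 s j.+1; nth x0 s j.+2] \in B.
Proof.
case: k => [|[|k]] // s_uniq s_indep /andP [_ k_lt] start.
set G := (exists2 j, _ & _).
have walk j : j.+2 <= k.+2 -> G \/ [set nth x0 s j; nth x0 s j.+1; nth x0 s k.+2] \in B.
  elim: j => [|j IH] jk; first by right.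
  case: (IH (ltnW jk)) => [found|prev]; first by left.
  have [triple | no_triple] := boolP ([set nth x0 s j; nth x0 s j.+1; nth x0 s j.+2] \in B).
    by left; exists j => //; exact: ltnW.
  have j2_lt : j.+2 < size s := leq_ltn_trans (ltnW jk) k_lt.
  have j1_lt : j.+1 < size s by apply: ltnW.
  right; apply: rank3_basis_shift prev no_triple _ _.
    by apply: s_indep; rewrite ?mem_nth // nth_uniq // ltn_eqF.
  by rewrite nth_uniq // ltn_eqF.
by have [//|last] := walk k (leqnn _); exists k.
Qed.

End Rank3Bases.

Lemma rank3_no_parallel_DJS (n : nat) (B : {set {set 'I_n}}) :
  rank3_matroid B -> no_parallel B -> DJS B.
Proof.
move=> [basesB card_basis] no_par w w_uniq w_nonloop.
have w_indep : {in w &, forall a b, a != b -> indep B [set a; b]}.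
  by move=> a b; rewrite !w_nonloop; exact: no_parallel_indep_pair.
have [X XB] : exists X, X \in B by case: basesB => /set0Pn.
have /card_gt0P [x0 _] : 0 < #|X| by rewrite card_basis.
have w_size : 2 < size w.
  rewrite -(card_uniqP w_uniq) -(card_basis _ XB); apply: subset_leq_card.
  by apply/subsetP => x xX; rewrite w_nonloop (basis_mem_nonloop XB xX).
have w_size1 : 1 < size w := ltnW w_size.
have w_size0 : 0 < size w := ltnW w_size1.
have w01 : nth x0 w 0 != nth x0 w 1 by rewrite nth_uniq.
have [|e e_new start] := indep_pair_basis card_basis _ w01.
  by apply: w_indep w01; rewrite mem_nth.
have e_w : e \in w by rewrite w_nonloop (basis_mem_nonloop start) // !inE eqxx orbT.
have e_pos : 1 < index e w.
  case E: (index e w) => [|[|k]] //; move: e_new;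
  by rewrite -(nth_index x0 e_w) E !inE eqxx ?orbT.
have e_idx : 1 < index e w < size w by rewrite e_pos index_mem.
have w01e_basis : [set nth x0 w 0; nth x0 w 1; nth x0 w (index e w)] \in B.
  by rewrite nth_index.
have [j jk triple] := consecutive_basis basesB card_basis w_uniq w_indep e_idx w01e_basis.
exists j; first by rewrite (leq_ltn_trans jk) ?index_mem.
by apply/existsP; exists x0.
Qed.

Theorem proposition6p6 :
  (forall (n : nat) (B : {set {set 'I_n}}),
     rank3_matroid B -> no_parallel B -> DJS B) /\
  (forall (n : nat) (B : {set {set 'I_n}}),
     rank3_matroid B -> simple_matroid B -> DJS B).
Proof.
split=> n B rank3; first exact: rank3_no_parallel_DJS.
by case=> _ no_par; exact: rank3_no_parallel_DJS.
Qed.
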